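(* (Simulation of $\lambda_{\mathrm{act}}$ term reduction in $\lambda_{\mathrm{ch}}$.) If $\Gamma \mid B \vdash M_1 : A$ and $M_1 \longrightarrow_{\mathsf{M}} M_2$ in $\lambda_{\mathrm{act}}$, then for any $\alpha$, $[\![M_1]\!]\alpha \longrightarrow_{\mathsf{M}}^{*} [\![M_2]\!]\alpha$ in $\lambda_{\mathrm{ch}}$.
   Context: $\lambda_{\mathrm{act}}$: types $A,B,C ::= \mathbf{1}\mid A\xrightarrow{C}B\mid\mathsf{ActorRef}(A)$; $\alpha$ ranges over variables and names; values $V,W ::= \alpha\mid\lambda x.M\mid()$; computations $M ::= V\,W\mid\mathbf{let}\ x\Leftarrow M\ \mathbf{in}\ N\mid\mathbf{return}\ V\mid\mathbf{spawn}\ M\mid\mathbf{send}\ V\ W\mid\mathbf{receive}\mid\mathbf{self}$; value typing ($\Gamma\vdash\lambda x.M:A\xrightarrow{C}B$ if $\Gamma,x:A\mid C\vdash M:B$; variables/names from $\Gamma$; $():\mathbf 1$) and computation typing $\Gamma\mid C\vdash M:A$ ($V\,W:B$ if $V:A\xrightarrow{C}B$, $W:A$; $\mathbf{let}$ with both parts under $C$; $\mathbf{return}\ V:A$ if $V:A$; $\mathbf{send}\ V\ W:\mathbf 1$ if $V:A$, $W:\mathsf{ActorRef}(A)$; $\Gamma\mid A\vdash\mathbf{receive}:A$; $\Gamma\mid C\vdash\mathbf{spawn}\ M:\mathsf{ActorRef}(A)$ if $\Gamma\mid A\vdash M:\mathbf 1$; $\Gamma\mid A\vdash\mathbf{self}:\mathsf{ActorRef}(A)$).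 $\lambda_{\mathrm{ch}}$: types $\mathbf 1\mid A\to B\mid\mathsf{Chan}(A)$; same values; computations $V\,W\mid\mathbf{let}\ x\Leftarrow M\ \mathbf{in}\ N\mid\mathbf{return}\ V\mid\mathbf{fork}\ M\mid\mathbf{give}\ V\ W\mid\mathbf{take}\ V\mid\mathbf{newCh}$. In both calculi evaluation contexts are $E ::= [\,]\mid\mathbf{let}\ x\Leftarrow E\ \mathbf{in}\ M$ and term reduction $\longrightarrow_{\mathsf{M}}$ is given by $(\lambda x.M)V\longrightarrow_{\mathsf{M}} M\{V/x\}$, $\mathbf{let}\ x\Leftarrow\mathbf{return}\ V\ \mathbf{in}\ M\longrightarrow_{\mathsf{M}} M\{V/x\}$, and $E[M]\longrightarrow_{\mathsf{M}}E[M']$ if $M\longrightarrow_{\mathsf{M}}M'$; $\longrightarrow_{\mathsf{M}}^{*}$ is its reflexive–transitive closure. Translation $[\![-]\!]$ from $\lambda_{\mathrm{act}}$ to $\lambda_{\mathrm{ch}}$: values $[\![x]\!]=x$, $[\![a]\!]=a$, $[\![()]\!]=()$, $[\![\lambda x.M]\!]=\lambda x.\lambda ch.([\![M]\!]ch)$; computations, parameterised by $ch$: $[\![\mathbf{let}\ x\Leftarrow M\ \mathbf{in}\ N]\!]ch=\mathbf{let}\ x\Leftarrow[\![M]\!]ch\ \mathbf{in}\ [\![N]\!]ch$, $[\![V\,W]\!]ch=\mathbf{let}\ f\Leftarrow([\![V]\!]\,[\![W]\!])\ \mathbf{in}\ f\,ch$, $[\![\mathbf{return}\ V]\!]ch=\mathbf{return}\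 [\![V]\!]$, $[\![\mathbf{self}]\!]ch=\mathbf{return}\ ch$, $[\![\mathbf{receive}]\!]ch=\mathbf{take}\ ch$, $[\![\mathbf{spawn}\ M]\!]ch=\mathbf{let}\ chMb\Leftarrow\mathbf{newCh}\ \mathbf{in}\ \mathbf{let}\ y\Leftarrow\mathbf{fork}([\![M]\!]chMb)\ \mathbf{in}\ \mathbf{return}\ chMb$ ($y$ fresh), $[\![\mathbf{send}\ V\ W]\!]ch=\mathbf{give}\ [\![V]\!]\ [\![W]\!]$. *)

(* Syntax uses de Bruijn indices for variables (index 0 =
   innermost binder); names (actor / channel names) are a separate sort,
   represented by natural numbers. *)
From Stdlib Require Import List Relations.
Import ListNotations.

Module Act.

Inductive ty : Type :=
| TUnit : ty
| TFun : ty -> ty -> ty -> ty      (* TFun A C B  =  A -C-> B *)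
| TActorRef : ty -> ty.

Inductive val : Type :=
| Var : nat -> val
| Name : nat -> val
| Lam : comp -> val
| Unit : val
with comp : Type :=
| App : val -> val -> comp
| Let : comp -> comp -> comp       (* let x <= M in N, x = index 0 in N *)
| Return : val -> comp
| Spawn : comp -> comp
| Send : val -> val -> comp
| Receive : comp
| Self : comp.

Definition upren (r : nat -> nat) : nat -> nat :=
  fun i => match i with 0 => 0 | S i => S (r i) end.

Fixpoint ren_val (r : nat -> nat) (v : val) : val :=
  match v with
  | Var i => Var (r i)
  | Name a => Name a
  | Lam M => Lam (ren_comp (upren r) M)
  | Unit => Unit
  end
with ren_comp (r : nat -> nat) (M : comp) : comp :=
  match M with
  | App V W => App (ren_val r V) (ren_val r W)
  | Let M N => Let (ren_comp r M) (ren_comp (upren r) N)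
  | Return V => Return (ren_val r V)
  | Spawn M => Spawn (ren_comp r M)
  | Send V W => Send (ren_val r V) (ren_val r W)
  | Receive => Receive
  | Self => Self
  end.

Definition upsub (s : nat -> val) : nat -> val :=
  fun i => match i with 0 => Var 0 | S i => ren_val S (s i) end.

Fixpoint sub_val (s : nat -> val) (v : val) : val :=
  match v with
  | Var i => s i
  | Name a => Name a
  | Lam M => Lam (sub_comp (upsub s) M)
  | Unit => Unit
  end
with sub_comp (s : nat -> val) (M : comp) : comp :=
  match M with
  | App V W => App (sub_val s V) (sub_val s W)
  | Let M N => Let (sub_comp s M) (sub_comp (upsub s) N)
  | Return V => Return (sub_val s V)
  | Spawn M => Spawn (sub_comp s M)
  | Send V W => Send (sub_val s V) (sub_val s W)
  | Receive => Receive
  | Self => Self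
  end.

Definition subst1 (M : comp) (V : val) : comp :=
  sub_comp (fun i => match i with 0 => V | S i => Var i end) M.

Record ctx : Type := { cvars : list ty ; cnames : nat -> option ty }.

Definition ctx_ext (G : ctx) (A : ty) : ctx :=
  {| cvars := A :: cvars G ; cnames := cnames G |}.

Inductive vtyped : ctx -> val -> ty -> Prop :=
| T_Var : forall G i A, nth_error (cvars G) i = Some A -> vtyped G (Var i) A
| T_Name : forall G a A, cnames G a = Some A -> vtyped G (Name a) A
| T_Lam : forall G M A B C, ctyped (ctx_ext G A) C M B ->
    vtyped G (Lam M) (TFun A C B)
| T_Unit : forall G, vtyped G Unit TUnit
(* ctyped G C M A  :  G | C |- M : A *)
with ctyped : ctx -> ty -> comp -> ty -> Prop :=
| T_App : forall G C V W A B, vtyped G V (TFun A C B) -> vtyped G W A ->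
    ctyped G C (App V W) B
| T_Let : forall G C M N A B, ctyped G C M A -> ctyped (ctx_ext G A) C N B ->
    ctyped G C (Let M N) B
| T_Return : forall G C V A, vtyped G V A -> ctyped G C (Return V) A
| T_Send : forall G C V W A, vtyped G V A -> vtyped G W (TActorRef A) ->
    ctyped G C (Send V W) TUnit
| T_Receive : forall G A, ctyped G A Receive A
| T_Spawn : forall G C M A, ctyped G A M TUnit ->
    ctyped G C (Spawn M) (TActorRef A)
| T_Self : forall G A, ctyped G A Self (TActorRef A).

Inductive ectx : Type :=
| EHole : ectx
| ELet : ectx -> comp -> ectx.

Fixpoint plug (E : ectx) (M : comp) : comp :=
  match E with
  | EHole => M
  | ELet E N => Let (plug E M) N
  end.

Inductive step : comp -> comp -> Prop :=
| S_Beta : forall M V, step (App (Lam M) V) (subst1 M V)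
| S_LetRet : forall V M, step (Let (Return V) M) (subst1 M V)
| S_Ctx : forall E M M', step M M' -> step (plug E M) (plug E M').

End Act.

Module Ch.

Inductive val : Type :=
| Var : nat -> val
| Name : nat -> val
| Lam : comp -> val
| Unit : val
with comp : Type :=
| App : val -> val -> comp
| Let : comp -> comp -> comp
| Return : val -> comp
| Fork : comp -> comp
| Give : val -> val -> comp
| Take : val -> comp
| NewCh : comp.

Definition upren (r : nat -> nat) : nat -> nat :=
  fun i => match i with 0 => 0 | S i => S (r i) end.

Fixpoint ren_val (r : nat -> nat) (v : val) : val :=
  match v with
  | Var i => Var (r i)
  | Name a => Name a
  | Lam M => Lam (ren_comp (upren r) M)
  | Unit => Unit
  end
with ren_comp (r : nat -> nat) (M : comp) : comp :=
  match M with
  | App V W => App (ren_val r V) (ren_val r W)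
  | Let M N => Let (ren_comp r M) (ren_comp (upren r) N)
  | Return V => Return (ren_val r V)
  | Fork M => Fork (ren_comp r M)
  | Give V W => Give (ren_val r V) (ren_val r W)
  | Take V => Take (ren_val r V)
  | NewCh => NewCh
  end.

Definition upsub (s : nat -> val) : nat -> val :=
  fun i => match i with 0 => Var 0 | S i => ren_val S (s i) end.

Fixpoint sub_val (s : nat -> val) (v : val) : val :=
  match v with
  | Var i => s i
  | Name a => Name a
  | Lam M => Lam (sub_comp (upsub s) M)
  | Unit => Unit
  end
with sub_comp (s : nat -> val) (M : comp) : comp :=
  match M with
  | App V W => App (sub_val s V) (sub_val s W)
  | Let M N => Let (sub_comp s M) (sub_comp (upsub s) N)
  | Return V => Return (sub_val s V)
  | Fork M => Fork (sub_comp s M)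
  | Give V W => Give (sub_val s V) (sub_val s W)
  | Take V => Take (sub_val s V)
  | NewCh => NewCh
  end.

Definition subst1 (M : comp) (V : val) : comp :=
  sub_comp (fun i => match i with 0 => V | S i => Var i end) M.

Inductive ectx : Type :=
| EHole : ectx
| ELet : ectx -> comp -> ectx.

Fixpoint plug (E : ectx) (M : comp) : comp :=
  match E with
  | EHole => M
  | ELet E N => Let (plug E M) N
  end.

Inductive step : comp -> comp -> Prop :=
| S_Beta : forall M V, step (App (Lam M) V) (subst1 M V)
| S_LetRet : forall V M, step (Let (Return V) M) (subst1 M V)
| S_Ctx : forall E M M', step M M' -> step (plug E M) (plug E M').

Definition steps : comp -> comp -> Prop := clos_refl_trans comp step.

End Ch.

(* tr_val r V / tr_comp r M ch: the translation, where the source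
   variable i is sent to the target variable r i (r accounts for the
   extra binders introduced by the translation), and ch is the target
   value playing the role of the mailbox parameter.  The translation of
   the paper is [[V]] = tr_val id V and [[M]]ch = tr_comp id M ch.     *)
Fixpoint tr_val (r : nat -> nat) (v : Act.val) : Ch.val :=
  match v with
  | Act.Var i => Ch.Var (r i)
  | Act.Name a => Ch.Name a
  (* [[lam x. M]] = lam x. return (lam ch. ([[M]] ch)) : x is index 1, ch index 0
     (fine-grain CBV: the body of lam x must be a computation) *)
  | Act.Lam M =>
      Ch.Lam (Ch.Return (Ch.Lam (tr_comp (fun i => match i with 0 => 1
                                                | S i => S (S (r i)) end)
                              M (Ch.Var 0))))
  | Act.Unit => Ch.Unit
  end
with tr_comp (r : nat -> nat) (M : Act.comp) (ch : Ch.val) : Ch.comp :=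
  match M with
  | Act.Let M N =>
      Ch.Let (tr_comp r M ch) (tr_comp (Act.upren r) N (Ch.ren_val S ch))
  | Act.App V W =>
      Ch.Let (Ch.App (tr_val r V) (tr_val r W))
             (Ch.App (Ch.Var 0) (Ch.ren_val S ch))
  | Act.Return V => Ch.Return (tr_val r V)
  | Act.Self => Ch.Return ch
  | Act.Receive => Ch.Take ch
  (* let chMb <= newCh in let y <= fork ([[M]] chMb) in return chMb *)
  | Act.Spawn M =>
      Ch.Let Ch.NewCh
        (Ch.Let (Ch.Fork (tr_comp (fun i => S (r i)) M (Ch.Var 0)))
                (Ch.Return (Ch.Var 1)))
  | Act.Send V W => Ch.Give (tr_val r V) (tr_val r W)
  end.

Definition trV (V : Act.val) : Ch.val := tr_val (fun i => i) V.
Definition trM (M : Act.comp) (ch : Ch.val) : Ch.comp := tr_comp (fun i => i) M ch.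

Definition var_or_name (a : Ch.val) : Prop :=
  (exists i, a = Ch.Var i) \/ (exists n, a = Ch.Name n).

(* The translation commutes with substitution: translating M{V/x} is substituting [[V]] into the
   translation of M.  Hence a let-return step is simulated by one let-return step, and a beta step
   by three administrative steps (beta, let-return, then beta again to pass the mailbox); since
   evaluation contexts translate to evaluation contexts, the congruence rule is simulated as well. *)
From Stdlib Require Import Relations FunctionalExtensionality.

Scheme act_val_ind := Induction for Act.val Sort Prop
  with act_comp_ind := Induction for Act.comp Sort Prop.
Combined Scheme act_mutind from act_val_ind, act_comp_ind.
Scheme ch_val_ind := Induction for Ch.val Sort Prop
  with ch_comp_ind := Induction for Ch.comp Sort Prop.
Combined Scheme ch_mutind from ch_val_ind, ch_comp_ind.

Definition act_single (V : Act.val) : nat -> Act.val :=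
  fun i => match i with 0 => V | S i => Act.Var i end.

Definition ch_single (V : Ch.val) : nat -> Ch.val :=
  fun i => match i with 0 => V | S i => Ch.Var i end.

Lemma ch_ren_ren :
  (forall v f g, Ch.ren_val f (Ch.ren_val g v) = Ch.ren_val (fun i => f (g i)) v) /\
  (forall M f g, Ch.ren_comp f (Ch.ren_comp g M) = Ch.ren_comp (fun i => f (g i)) M).
Proof.
  apply ch_mutind; intros; simpl; rewrite ?H, ?H0; try reflexivity;
  f_equal; f_equal; extensionality i; destruct i; reflexivity.
Qed.

Lemma ch_sub_ren :
  (forall v s r, Ch.sub_val s (Ch.ren_val r v) = Ch.sub_val (fun i => s (r i)) v) /\
  (forall M s r, Ch.sub_comp s (Ch.ren_comp r M) = Ch.sub_comp (fun i => s (r i)) M).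
Proof.
  apply ch_mutind; intros; simpl; rewrite ?H, ?H0; try reflexivity;
  f_equal; f_equal; extensionality i; destruct i; reflexivity.
Qed.

Lemma ch_ren_sub :
  (forall v s r, Ch.ren_val r (Ch.sub_val s v) = Ch.sub_val (fun i => Ch.ren_val r (s i)) v) /\
  (forall M s r, Ch.ren_comp r (Ch.sub_comp s M) = Ch.sub_comp (fun i => Ch.ren_val r (s i)) M).
Proof.
  apply ch_mutind; intros; simpl; rewrite ?H, ?H0; try reflexivity;
  f_equal; f_equal; extensionality i; destruct i; simpl; try reflexivity;
  rewrite !(proj1 ch_ren_ren); reflexivity.
Qed.

Lemma ch_upsub_ren_S v s :
  Ch.sub_val (Ch.upsub s) (Ch.ren_val S v) = Ch.ren_val S (Ch.sub_val s v).
Proof. rewrite (proj1 ch_sub_ren), (proj1 ch_ren_sub). reflexivity. Qed.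

Lemma ch_sub_id : (forall v, Ch.sub_val Ch.Var v = v) /\ (forall M, Ch.sub_comp Ch.Var M = M).
Proof.
  assert (upsub_Var : Ch.upsub Ch.Var = Ch.Var) by (extensionality i; destruct i; reflexivity).
  apply ch_mutind; intros; simpl; rewrite ?upsub_Var, ?H, ?H0; reflexivity.
Qed.

Lemma ch_single_ren_S V v : Ch.sub_val (ch_single V) (Ch.ren_val S v) = v.
Proof. rewrite (proj1 ch_sub_ren). apply ch_sub_id. Qed.

Lemma ch_sub_sub :
  (forall v s t, Ch.sub_val t (Ch.sub_val s v) = Ch.sub_val (fun i => Ch.sub_val t (s i)) v) /\
  (forall M s t, Ch.sub_comp t (Ch.sub_comp s M) = Ch.sub_comp (fun i => Ch.sub_val t (s i)) M).
Proof.
  apply ch_mutind; intros; simpl; rewrite ?H, ?H0; try reflexivity;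
  f_equal; f_equal; extensionality i; destruct i; simpl; try reflexivity;
  apply ch_upsub_ren_S.
Qed.

Lemma tr_act_ren :
  (forall v r f, tr_val r (Act.ren_val f v) = tr_val (fun i => r (f i)) v) /\
  (forall M r f ch, tr_comp r (Act.ren_comp f M) ch = tr_comp (fun i => r (f i)) M ch).
Proof.
  apply act_mutind; intros; simpl; rewrite ?H, ?H0; try reflexivity;
  repeat f_equal; extensionality i; destruct i; reflexivity.
Qed.

Lemma ch_ren_tr :
  (forall v r g, Ch.ren_val g (tr_val r v) = tr_val (fun i => g (r i)) v) /\
  (forall M r g ch,
     Ch.ren_comp g (tr_comp r M ch) = tr_comp (fun i => g (r i)) M (Ch.ren_val g ch)).
Proof.
  apply act_mutind; intros; simpl; rewrite ?H, ?H0; try reflexivity;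
  rewrite ?(proj1 ch_ren_ren); repeat f_equal; extensionality i; destruct i; reflexivity.
Qed.

Lemma ch_sub_tr :
  (forall v r r' s t, (forall i, t (r i) = tr_val r' (s i)) ->
     Ch.sub_val t (tr_val r v) = tr_val r' (Act.sub_val s v)) /\
  (forall M r r' s t ch, (forall i, t (r i) = tr_val r' (s i)) ->
     Ch.sub_comp t (tr_comp r M ch) = tr_comp r' (Act.sub_comp s M) (Ch.sub_val t ch)).
Proof.
  apply act_mutind; intros; simpl; auto.
  - do 3 f_equal.
    erewrite H with (ch := Ch.Var 0); [reflexivity |].
    intros [|j]; simpl; [reflexivity |].
    rewrite H0, (proj1 tr_act_ren), !(proj1 ch_ren_tr). reflexivity.
  - erewrite H, H0 by eassumption. rewrite ch_upsub_ren_S. reflexivity.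
  - erewrite H by eassumption. erewrite H0 with (r' := Act.upren r');
      [rewrite ch_upsub_ren_S; reflexivity |].
    intros [|j]; simpl; [reflexivity |].
    rewrite H1, (proj1 tr_act_ren), (proj1 ch_ren_tr). reflexivity.
  - erewrite H by eassumption. reflexivity.
  - erewrite H with (ch := Ch.Var 0); [reflexivity |].
    intros j; simpl. rewrite H0, (proj1 ch_ren_tr). reflexivity.
  - erewrite H, H0 by eassumption. reflexivity.
Qed.

Lemma tr_subst1 r M V ch :
  tr_comp r (Act.subst1 M V) ch
  = Ch.sub_comp (ch_single (tr_val r V)) (tr_comp (Act.upren r) M (Ch.ren_val S ch)).
Proof.
  erewrite (proj2 ch_sub_tr) with (s := act_single V) by (intros [|j]; reflexivity).
  rewrite ch_single_ren_S. reflexivity.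
Qed.

Lemma tr_letret_steps r V M ch :
  Ch.steps (tr_comp r (Act.Let (Act.Return V) M) ch) (tr_comp r (Act.subst1 M V) ch).
Proof. rewrite tr_subst1. apply rt_step, Ch.S_LetRet. Qed.

Lemma tr_beta_steps r M V ch :
  Ch.steps (tr_comp r (Act.App (Act.Lam M) V) ch) (tr_comp r (Act.subst1 M V) ch).
Proof.
  set (K := tr_comp (fun i => match i with 0 => 1 | S i => S (S (r i)) end) M (Ch.Var 0)).
  set (L := Ch.Lam (Ch.sub_comp (Ch.upsub (ch_single (tr_val r V))) K)).
  assert (beta_outer : Ch.step (tr_comp r (Act.App (Act.Lam M) V) ch)
                               (Ch.Let (Ch.Return L) (Ch.App (Ch.Var 0) (Ch.ren_val S ch))))
    by exact (Ch.S_Ctx (Ch.ELet Ch.EHole _) _ _ (Ch.S_Beta _ _)).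
  assert (let_return : Ch.step (Ch.Let (Ch.Return L) (Ch.App (Ch.Var 0) (Ch.ren_val S ch)))
                               (Ch.App L ch)).
  { replace (Ch.App L ch) with (Ch.subst1 (Ch.App (Ch.Var 0) (Ch.ren_val S ch)) L)
      by exact (f_equal (Ch.App L) (ch_single_ren_S L ch)).
    apply Ch.S_LetRet. }
  eapply rt_trans; [apply rt_step, beta_outer |].
  eapply rt_trans; [apply rt_step, let_return |].
  eapply rt_trans; [apply rt_step, Ch.S_Beta |].
  unfold Ch.subst1, K. rewrite (proj2 ch_sub_sub).
  erewrite (proj2 ch_sub_tr) with (s := act_single V); [apply rt_refl |].
  intros [|j]; [apply ch_single_ren_S | reflexivity].
Qed.

Fixpoint tr_ectx (r : nat -> nat) (E : Act.ectx) (ch : Ch.val) : Ch.ectx :=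
  match E with
  | Act.EHole => Ch.EHole
  | Act.ELet E N => Ch.ELet (tr_ectx r E ch) (tr_comp (Act.upren r) N (Ch.ren_val S ch))
  end.

Lemma tr_plug r E M ch :
  tr_comp r (Act.plug E M) ch = Ch.plug (tr_ectx r E ch) (tr_comp r M ch).
Proof. induction E; simpl; congruence. Qed.

Lemma ch_steps_plug E M M' : Ch.steps M M' -> Ch.steps (Ch.plug E M) (Ch.plug E M').
Proof.
  induction 1.
  - apply rt_step, Ch.S_Ctx; assumption.
  - apply rt_refl.
  - eapply rt_trans; eassumption.
Qed.

Lemma tr_step_steps r M1 M2 ch :
  Act.step M1 M2 -> Ch.steps (tr_comp r M1 ch) (tr_comp r M2 ch).
Proof.
  intros Hstep. revert ch. induction Hstep; intros ch.
  - apply tr_beta_steps.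
  - apply tr_letret_steps.
  - rewrite !tr_plug. apply ch_steps_plug, IHHstep.
Qed.

Theorem lemma19 (G : Act.ctx) (B A : Act.ty) (M1 M2 : Act.comp) (alpha : Ch.val) :
  Act.ctyped G B M1 A ->
  Act.step M1 M2 ->
  var_or_name alpha ->
  Ch.steps (trM M1 alpha) (trM M2 alpha).
Proof. intros _ Hstep _. apply tr_step_steps, Hstep. Qed.
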